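(* Let $\Bbbk$ be a field, $n\ge3$, $q\in\Bbbk$ a root of unity such that $q^2$ has order $n$ (and $q\ne q^{-1}$). Consider $K=\Bbbk\mathbb{Z}_n$ and the Hopf algebras $H=\Bbbk[x]/(x^n)$ and $H^*=\Bbbk[x^*]/((x^* )^n)$ in $K\text{-}\mathbf{Mod}$ as in the context, with the nondegenerate Hopf pairing $\langle\,,\rangle\colon H^*\otimes H\to\Bbbk$ determined by $\langle x^*,x\rangle=\frac{1}{q-q^{-1}}$. Then the braided Drinfeld double $\mathrm{Drin}_K(H^*,H)$ is generated by a group-like element $g$, a $(g^{-1},1)$-skew primitive element $x$ and a $(g^{-1},1)$-skew primitive element $x^*$, subject to the relations $$g^n=1,\quad x^n=(x^* )^n=0,\quad gx=q^{-2}xg,\quad gx^*=q^2x^*g,\quad x^*x-q^2xx^*=\frac{1}{q-q^{-1}}(1-g^{-2}).$$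
   Context: $K=\Bbbk\mathbb{Z}_n$, $\mathbb{Z}_n=\langle g\mid g^n=1\rangle$, quasi-triangular with $\mathcal{R}=R^{(1)}\otimes R^{(2)}=\frac1n\sum_{i,j=0}^{n-1}q^{-2ij}g^i\otimes g^j$ and inverse $\mathcal{R}^{-1}=R^{(-1)}\otimes R^{(-2)}=\frac1n\sum_{i,j}q^{-2ij}g^{-i}\otimes g^j$. $H=\Bbbk[x]/(x^n)$ is a Hopf algebra in $K\text{-}\mathbf{Mod}$ (braiding $v\otimes w\mapsto R^{(2)}w\otimes R^{(1)}v$) with $g\cdot x=q^{-2}x$, $x$ primitive, $\Delta(x^m)=\sum_i\binom{m}{i}_{q^2}x^i\otimes x^{m-i}$; $H^*=\Bbbk[x^*]/((x^* )^n)$ is the analogous Hopf algebra in $K\text{-}\mathbf{Mod}$ with $x^*$ primitive and $g\cdot x^*=q^2x^*$. Sumless Sweedler notation $\Delta(b)=b_{(1)}\otimes b_{(2)}$ is used. Given a Hopf algebra $H$ in $K\text{-}\mathbf{Mod}$, a Hopf algebra $H^*$ in $K\text{-}\mathbf{Mod}$ and a nondegenerate Hopf algebra pairing $\langle\,,\rangle\colon H^*\otimes H\to\Bbbk$, the braided Drinfeld double $\mathrm{Drin}_K(H^*,H)$ is the $\Bbbk$-Hopf algebra on $H^*\otimes K\otimes H$ containing $H^*,K,H$ as subalgebras, with, for $b\in H$, $c\in H^*$, $d\in K$: $db=(d_{(1)}\cdot b)d_{(2)}$, $dc=(d_{(1)}\cdot c)d_{(2)}$, and $(R^{(-1)}\cdot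 b_{(2)})(R^{(-2)}\cdot c_{(1)})\langle c_{(2)},b_{(1)}\rangle=R^{(-1)}c_{(2)}b_{(1)}R^{(2)}\langle R^{(-2)}\cdot c_{(1)},R^{(1)}\cdot b_{(2)}\rangle$ (with independent copies of $\mathcal{R}$, $\mathcal{R}^{-1}$ in each term); coproduct $\Delta(d)=d_{(1)}\otimes d_{(2)}$, $\Delta(b)=b_{(1)}R^{(2)}\otimes(R^{(1)}\cdot b_{(2)})$, $\Delta(c)=R^{(-1)}c_{(2)}\otimes(R^{(-2)}\cdot c_{(1)})$; counit extended multiplicatively; antipode $S(d)=S_K(d)$, $S(b)=S_K(R^{(2)})(R^{(1)}\cdot S_H(b))$, $S(c)=S_K(R^{(-1)})(R^{(-2)}\cdot S^{-1}_{H^*}(c))$. An element $z$ is $(a,1)$-skew primitive if $\Delta(z)=a\otimes z+z\otimes1$. *)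

From HB Require Import structures.
From mathcomp Require Import all_boot all_order all_algebra all_field.
Set Implicit Arguments. Unset Strict Implicit. Unset Printing Implicit Defensive.
Import GRing.Theory.
Local Open Scope ring_scope.

Fixpoint qbinom (k : nzRingType) (r : k) (m i : nat) : k :=
  match m, i with
  | _, 0 => 1
  | 0, _.+1 => 0
  | m'.+1, i'.+1 => qbinom r m' i' + r ^+ i'.+1 * qbinom r m' i'.+1
  end.

(* Elements of K = k Z_n are written g^e (e : nat, read mod n); g^{-s} = g^(n-s).
   Action of g^e on x^a in H (g.x = q^- 2 x):        (q^- 2)^(e a).
   Action of g^e on (x^* )^a in H^* (g.x^* = q^2 x^* ): (q^2)^(e a).
   R  = 1/n sum_{u,v} q^{-2uv} g^u (x) g^v,
   R^-1 = 1/n sum_{s,t} q^{-2st} g^{-s} (x) g^t.                              *)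
Definition actH (k : fieldType) (q : k) (e a : nat) : k := (q ^- 2) ^+ (e * a).
Definition actHs (k : fieldType) (q : k) (e a : nat) : k := (q ^+ 2) ^+ (e * a).
Definition Rcoef (k : fieldType) (n : nat) (q : k) (s t : nat) : k :=
  n%:R^-1 * (q ^- 2) ^+ (s * t).

(* Hopf algebra pairing <,> : H^* (x) H -> k, given by its values
   P l m = < (x^* )^l , x^m > on the monomial bases (0 <= l, m < n). *)
Definition hopf_pairing (k : fieldType) (n : nat) (q : k) (P : nat -> nat -> k) : Prop :=
  ((* <1, b> = eps(b) and <c, 1> = eps(c) *)
      forall m, (m < n)%N -> P 0%N m = (m == 0%N)%:R) /\
  [/\ (forall l, (l < n)%N -> P l 0%N = (l == 0%N)%:R),
      (* <c c', b> = <c, b_(1)> <c', b_(2)> *)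
      (forall l l' m, (l < n)%N -> (l' < n)%N -> (m < n)%N ->
         (if (l + l' < n)%N then P (l + l') m else 0) =
         \sum_(i < m.+1) qbinom (q ^+ 2) m i * P l i * P l' (m - i)%N),
      (* <c, b b'> = <c_(1), b> <c_(2), b'> *)
      (forall l m m', (l < n)%N -> (m < n)%N -> (m' < n)%N ->
         (if (m + m' < n)%N then P l (m + m') else 0) =
         \sum_(j < l.+1) qbinom (q ^+ 2) l j * P j m * P (l - j)%N m'),
      (* morphism in K-Mod: <g.c, g.b> = <c, b> *)
      (forall l m, (l < n)%N -> (m < n)%N -> actHs q 1 l * actH q 1 m * P l m = P l m)
    &
      \det (\matrix_(i < n, j < n) P i j) != 0]%R.

(* The PBW family (x^* )^a g^b x^c, i.e. the image of the basis of H^* (x) K (x) H. *)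
Definition pbw (k : fieldType) (n : nat) (A : falgType k) (G X Xs : A) : seq A :=
  [seq Xs ^+ t.1.1 * G ^+ t.1.2 * X ^+ t.2 | t : 'I_n * 'I_n * 'I_n].

(* The cross relation of Drin_K(H^*,H) for b = x^m, c = (x^* )^l, with
   Delta(x^m) = sum_i binom(m,i)_{q^2} x^i (x) x^(m-i) and likewise for x^* :
   (R^(-1).b_(2)) (R^(-2).c_(1)) <c_(2), b_(1)>
     = R^(-1) c_(2) b_(1) R^(2) <R^(-2).c_(1), R^(1).b_(2)>.              *)
Definition cross_lhs (k : fieldType) (n : nat) (q : k) (P : nat -> nat -> k)
  (A : falgType k) (X Xs : A) (l m : nat) : A :=
  \sum_(i < m.+1) \sum_(j < l.+1)
    (qbinom (q ^+ 2) m i * qbinom (q ^+ 2) l j * P (l - j)%N i) *: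
    \sum_(s < n) \sum_(t < n)
      Rcoef n q s t *:
        ((actH q (n - s) (m - i) *: X ^+ (m - i)) * (actHs q t j *: Xs ^+ j)).

Definition cross_rhs (k : fieldType) (n : nat) (q : k) (P : nat -> nat -> k)
  (A : falgType k) (G X Xs : A) (l m : nat) : A :=
  \sum_(i < m.+1) \sum_(j < l.+1)
    (qbinom (q ^+ 2) m i * qbinom (q ^+ 2) l j) *:
    \sum_(s < n) \sum_(t < n) \sum_(u < n) \sum_(v < n)
      (Rcoef n q s t * Rcoef n q u v *
         (actHs q t j * actH q u (m - i) * P j (m - i)%N)) *:
        (G ^+ (n - s) * Xs ^+ (l - j) * X ^+ i * G ^+ v).

(* A (with the elements G = g, X = x, Xs = x^* ) is the braided Drinfeld double
   Drin_K(H^*,H) for the pairing P, as an algebra: H^* = k[x^*]/((x^* )^n),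
   K = k Z_n, H = k[x]/(x^n) sit inside A as subalgebras, multiplication
   H^* (x) K (x) H -> A is a linear isomorphism, and the defining
   commutation relations hold. *)
Definition braided_double (k : fieldType) (n : nat) (q : k) (P : nat -> nat -> k)
  (A : falgType k) (G X Xs : A) : Prop :=
  [/\ G ^+ n = 1, X ^+ n = 0 & Xs ^+ n = 0] /\
  [/\ basis_of fullv (pbw n G X Xs),
      (* d b = (d_(1).b) d_(2) *)
      (forall e m, (e < n)%N -> (m < n)%N ->
         G ^+ e * X ^+ m = actH q e m *: (X ^+ m * G ^+ e)),
      (* d c = (d_(1).c) d_(2) *)
      (forall e l, (e < n)%N -> (l < n)%N ->
         G ^+ e * Xs ^+ l = actHs q e l *: (Xs ^+ l * G ^+ e))
    & (forall l m, (l < n)%N -> (m < n)%N ->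
         cross_lhs n q P X Xs l m = cross_rhs n q P G X Xs l m)].

(* A (x) A, identified with square matrices via the coordinates in a basis of A. *)
Definition tens (k : fieldType) (A : falgType k) (a b : A) : 'M[k]_(\dim (fullv : {vspace A})) :=
  \matrix_(i, j) (coord (vbasis fullv) i a * coord (vbasis fullv) j b).

(* Coproduct of the double on H:  Delta(b) = b_(1) R^(2) (x) (R^(1).b_(2)), b = x^m. *)
Definition delta_H (k : fieldType) (n : nat) (q : k) (A : falgType k) (G X : A) (m : nat) :=
  \sum_(i < m.+1) qbinom (q ^+ 2) m i *:
    \sum_(u < n) \sum_(v < n)
      Rcoef n q u v *: tens (X ^+ i * G ^+ v) (actH q u (m - i) *: X ^+ (m - i)).

(* Coproduct of the double on H^*: Delta(c) = R^(-1) c_(2) (x) (R^(-2).c_(1)), c = (x^* )^l. *)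
Definition delta_Hs (k : fieldType) (n : nat) (q : k) (A : falgType k) (G Xs : A) (l : nat) :=
  \sum_(j < l.+1) qbinom (q ^+ 2) l j *:
    \sum_(s < n) \sum_(t < n)
      Rcoef n q s t *: tens (G ^+ (n - s) * Xs ^+ (l - j)) (actHs q t j *: Xs ^+ j).

(* The relations of the presentation (g^{-2} written g^(n-2), valid as g^n = 1). *)
Definition drin_relations (k : fieldType) (n : nat) (q : k) (B : algType k) (g x xs : B) : Prop :=
  [/\ g ^+ n = 1, x ^+ n = 0 & xs ^+ n = 0] /\
  [/\ g * x = q ^- 2 *: (x * g),
      g * xs = q ^+ 2 *: (xs * g)
    & xs * x - q ^+ 2 *: (x * xs) = (q - q^-1)^-1 *: (1 - g ^+ (n - 2))].

(* A is generated by g, x, xs subject exactly to the relations above: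
   universal property of the presented algebra. *)
Definition presented_by (k : fieldType) (n : nat) (q : k) (A : falgType k) (G X Xs : A) : Prop :=
  forall (B : algType k) (g x xs : B), drin_relations n q g x xs ->
    (exists f : {lrmorphism A -> B}, [/\ f G = g, f X = x & f Xs = xs]) /\
    (forall f1 f2 : {lrmorphism A -> B},
        f1 G = f2 G -> f1 X = f2 X -> f1 Xs = f2 Xs -> f1 =1 f2).

(* The R-matrix of k Z_n is an average of characters, so by orthogonality of
   characters its legs contract against the Z_n-gradings of H and H^*. In
   degree one this collapses the coproducts of x and x^* to their
   skew-primitive form, and the cross relation for b = x, c = x^* to
   x^* x - q^2 x x^* = <x^*, x> (1 - g^-2), using the counit values of the
   pairing. For the presentation, the PBW words (x^* )^a g^b x^c form a basis
   of the double; in any algebra satisfying the relations, left multiplication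
   by g, x^* and x acts on these words by the same straightening rules (for x,
   by induction on a through the commutation of x with x^* ), so the linear map
   matching PBW words is multiplicative. *)

From HB Require Import structures.
From mathcomp Require Import all_boot all_order all_algebra all_field zify ring.
Import GRing.Theory.
Set Implicit Arguments. Unset Strict Implicit. Unset Printing Implicit Defensive.
Local Open Scope ring_scope.

Lemma sum_expr_unity_root (k : fieldType) (n : nat) (w : k) : w ^+ n = 1 ->
  \sum_(t < n) w ^+ t = if w == 1 then n%:R else 0.
Proof.
move=> wn; case: eqP => [->|/eqP w1].
  by under eq_bigr do rewrite expr1n; rewrite sumr_const card_ord.
have /eqP : (w - 1) * \sum_(t < n) w ^+ t = 0 by rewrite -subrX1 wn subrr.
by rewrite mulf_eq0 subr_eq0 (negbTE w1) => /eqP.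
Qed.

Lemma sum_prim_root_ratio (k : fieldType) (n a b : nat) (z : k) :
  n.-primitive_root z ->
  n%:R^-1 * \sum_(t < n) (z ^+ a / z ^+ b) ^+ t = (a == b %[mod n])%:R.
Proof.
move=> prz; have zb : z ^+ b != 0.
  by rewrite expf_neq0 // (prim_root_eq0 prz) -lt0n (prim_order_gt0 prz).
rewrite sum_expr_unity_root; last first.
  by rewrite exprMn exprVn -!exprM !(mulnC _ n) !exprM (prim_expr_order prz) !expr1n invr1 mulr1.
rewrite -(inj_eq (mulIf zb)) divfK // mul1r (eq_prim_root_expr prz).
by case: ifP; rewrite ?mulr0 // mulVf // (prim_root_natf_neq0 prz).
Qed.

Lemma sum_delta (k : fieldType) (V : lmodType k) (n j : nat) (F : nat -> V) :
  (j < n)%N -> \sum_(s < n) ((s : nat) == j)%:R *: F s = F j.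
Proof.
move=> jn; rewrite (eq_bigr (fun s : 'I_n => if (s : nat) == j then F s else 0)).
  by rewrite -big_mkcond big_ord1_eq jn.
by move=> s _; case: eqP; rewrite ?scale1r ?scale0r.
Qed.

Lemma tensZr (k : fieldType) (A : falgType k) (a b : A) (c : k) :
  tens a (c *: b) = c *: tens a b.
Proof. by apply/matrixP => i j; rewrite !mxE linearZ /= mulrCA. Qed.

Section RMatrix.
Variables (k : fieldType) (n : nat) (q : k).
Hypothesis prq : n.-primitive_root (q ^+ 2).

Lemma Rcoef_ratio (s t a : nat) :
  Rcoef n q s t * (q ^+ 2) ^+ (t * a) = n%:R^-1 * ((q ^+ 2) ^+ a / (q ^+ 2) ^+ s) ^+ t.
Proof.
rewrite /Rcoef -mulrA; congr (_ * _); move: (q ^+ 2) => r.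
by rewrite exprMn !exprVn -!exprM mulrC (mulnC a).
Qed.

Lemma sum_Rcoef_actHs (s j : nat) : (s < n)%N -> (j < n)%N ->
  \sum_(t < n) Rcoef n q s t * actHs q t j = (s == j)%:R.
Proof.
move=> sn jn; under eq_bigr do rewrite Rcoef_ratio.
by rewrite -mulr_sumr sum_prim_root_ratio // !modn_small // eq_sym.
Qed.

Lemma sum_Rcoef_actH (v e v0 : nat) : (v < n)%N -> (v0 < n)%N -> (n %| v0 + e)%N ->
  \sum_(u < n) Rcoef n q u v * actH q u e = (v == v0)%:R.
Proof.
move=> vn v0n dv0.
(* The dummy factor [(q ^+ 2) ^+ (u * 0)] lets [Rcoef_ratio] apply with [a = 0]. *)
have -> : \sum_(u < n) Rcoef n q u v * actH q u e =
          \sum_(u < n) Rcoef n q (v + e) u * (q ^+ 2) ^+ (u * 0).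
  apply: eq_bigr => u _.
  by rewrite /Rcoef /actH muln0 expr0 mulr1 -mulrA -exprD -mulnDr mulnC.
under eq_bigr do rewrite Rcoef_ratio; rewrite -mulr_sumr.
by rewrite sum_prim_root_ratio // eq_sym mod0n -(eqP dv0) eqn_modDr !modn_small.
Qed.

Lemma Rsum_cross_lhs (A : algType k) (E1 E2 : A) (e j : nat) : (j < n)%N ->
  \sum_(s < n) \sum_(t < n)
     Rcoef n q s t *: ((actH q (n - s) e *: E1) * (actHs q t j *: E2))
  = actH q (n - j) e *: (E1 * E2).
Proof.
move=> jn; rewrite -(sum_delta (fun s => actH q (n - s) e *: (E1 * E2)) jn).
apply: eq_bigr => s _; rewrite -(sum_Rcoef_actHs (ltn_ord s) jn) scaler_suml.
by apply: eq_bigr => t _; rewrite -scalerAl -scalerAr !scalerA mulrAC.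
Qed.

Lemma Rsum_cross_rhs (V : lmodType k) (E : nat -> nat -> V) (e j v0 : nat) (p : k) :
  (j < n)%N -> (v0 < n)%N -> (n %| v0 + e)%N ->
  \sum_(s < n) \sum_(t < n) \sum_(u < n) \sum_(v < n)
     (Rcoef n q s t * Rcoef n q u v * (actHs q t j * actH q u e * p)) *: E s v
  = p *: E j v0.
Proof.
move=> jn v0n dv0; rewrite -(sum_delta (fun s => p *: E s v0) jn).
apply: eq_bigr => s _; rewrite -(sum_Rcoef_actHs (ltn_ord s) jn) scaler_suml.
apply: eq_bigr => t _; rewrite -(sum_delta (fun v => p *: E s v) v0n) scaler_sumr.
rewrite exchange_big; apply: eq_bigr => v _.
rewrite -(sum_Rcoef_actH (ltn_ord v) v0n dv0) !scaler_suml scaler_sumr.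
by apply: eq_bigr => u _; rewrite !scalerA; congr (_ *: _); ring.
Qed.

Lemma Rsum_delta_H (A : falgType k) (E : nat -> A) (F : A) (e v0 : nat) :
  (v0 < n)%N -> (n %| v0 + e)%N ->
  \sum_(u < n) \sum_(v < n) Rcoef n q u v *: tens (E v) (actH q u e *: F) = tens (E v0) F.
Proof.
move=> v0n dv0; rewrite -(sum_delta (fun v => tens (E v) F) v0n) exchange_big.
apply: eq_bigr => v _; rewrite -(sum_Rcoef_actH (ltn_ord v) v0n dv0) scaler_suml.
by apply: eq_bigr => u _; rewrite tensZr scalerA.
Qed.

Lemma Rsum_delta_Hs (A : falgType k) (E : nat -> A) (F : A) (j : nat) : (j < n)%N ->
  \sum_(s < n) \sum_(t < n) Rcoef n q s t *: tens (E s) (actHs q t j *: F) = tens (E j) F.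
Proof.
move=> jn; rewrite -(sum_delta (fun s => tens (E s) F) jn).
apply: eq_bigr => s _; rewrite -(sum_Rcoef_actHs (ltn_ord s) jn) scaler_suml.
by apply: eq_bigr => t _; rewrite tensZr scalerA.
Qed.

End RMatrix.

Section DegreeOne.
Variables (k : fieldType) (n : nat) (q : k) (P : nat -> nat -> k) (A : falgType k) (G X Xs : A).
Hypotheses (prq : n.-primitive_root (q ^+ 2)) (n_gt1 : (1 < n)%N).

Let n_gt0 : (0 < n)%N. Proof. exact: ltnW. Qed.
Let pred_ltn : (n.-1 < n)%N. Proof. by rewrite prednK. Qed.
Let dvdn_pred : (n %| n.-1 + 1)%N. Proof. by rewrite addn1 prednK. Qed.

Lemma actH_gV : actH q (n - 1) 1 = q ^+ 2.
Proof.
have r_neq0 : q ^+ 2 != 0 by rewrite (prim_root_eq0 prq) -lt0n.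
rewrite /actH muln1 exprVn -[RHS](mulKf (expf_neq0 (n - 1) r_neq0)) -exprSr subn1.
by rewrite prednK // (prim_expr_order prq) mulr1.
Qed.

Lemma delta_H_x : delta_H n q G X 1 = tens (G ^+ (n - 1)) X + tens X 1.
Proof.
rewrite /delta_H !big_ord_recl big_ord0 /= subn0 subnn addr0.
rewrite (Rsum_delta_H prq (fun v => X ^+ 0 * G ^+ v) _ pred_ltn dvdn_pred).
rewrite (Rsum_delta_H prq (fun v => X ^+ 1 * G ^+ v) _ n_gt0 (dvdn0 n)).
by rewrite !expr0 !expr1 mul1r mulr1 mulr0 addr0 !scale1r subn1.
Qed.

Lemma delta_Hs_xs : G ^+ n = 1 -> delta_Hs n q G Xs 1 = tens (G ^+ (n - 1)) Xs + tens Xs 1.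
Proof.
move=> Gn; rewrite /delta_Hs !big_ord_recl big_ord0 /= subn0 subnn addr0.
rewrite (Rsum_delta_Hs prq (fun s => G ^+ (n - s) * Xs ^+ 1) _ n_gt0).
rewrite (Rsum_delta_Hs prq (fun s => G ^+ (n - s) * Xs ^+ 0) _ n_gt1).
by rewrite subn0 Gn !expr0 !expr1 mul1r mulr1 mulr0 addr0 !scale1r addrC.
Qed.

Lemma cross_lhs_11 : hopf_pairing n q P ->
  cross_lhs n q P X Xs 1 1 = q ^+ 2 *: (X * Xs) + P 1%N 1%N *: 1.
Proof.
case=> P0m [Pl0 _ _ _ _].
rewrite /cross_lhs !big_ord_recl !big_ord0 /= !subn0 subnn !addr0.
rewrite !(Rsum_cross_lhs prq) // Pl0 // P0m // P0m //= /bump /=.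
rewrite !addn0 !mulr0 !addr0 !mul1r !scale0r !add0r !addr0 scale1r actH_gV.
by rewrite /actH muln0 expr0 scale1r !expr1 expr0.
Qed.

Lemma cross_rhs_11 : G ^+ n = 1 -> hopf_pairing n q P ->
  cross_rhs n q P G X Xs 1 1 = Xs * X + P 1%N 1%N *: G ^+ (n - 2).
Proof.
move=> Gn [P0m [Pl0 _ _ _ _]].
rewrite /cross_rhs !big_ord_recl !big_ord0 /= !subn0 subnn !addr0 /bump /= !addn0.
pose E a c s v := G ^+ (n - s) * Xs ^+ a * X ^+ c * G ^+ v.
rewrite (Rsum_cross_rhs prq (E 1 0)%N _ n_gt0 pred_ltn dvdn_pred).
rewrite (Rsum_cross_rhs prq (E 0 0)%N _ n_gt1 pred_ltn dvdn_pred).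
rewrite (Rsum_cross_rhs prq (E 1 1)%N _ n_gt0 n_gt0 (dvdn0 n)).
rewrite (Rsum_cross_rhs prq (E 0 1)%N _ n_gt1 n_gt0 (dvdn0 n)) {}/E.
have GV2 : G ^+ (n - 1) * G ^+ n.-1 = G ^+ (n - 2).
  by rewrite -exprD (_ : n - 1 + n.-1 = n - 2 + n)%N ?exprD ?Gn ?mulr1 //; lia.
rewrite !P0m // !Pl0 //= !subn0 Gn !expr0 !expr1 !mulr0 !addr0 !mul1r !mulr1 GV2.
by rewrite !scale0r !scale1r add0r addr0 addrC.
Qed.

Lemma braided_double_relations : hopf_pairing n q P -> P 1%N 1%N = (q - q^-1)^-1 ->
  braided_double n q P G X Xs -> drin_relations n q G X Xs.
Proof.
move=> hp P11 [[Gn Xn Xsn] [_ GX GXs cross]]; split=> //; split.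
- by have := GX 1%N 1%N n_gt1 n_gt1; rewrite !expr1 /actH muln1 expr1.
- by have := GXs 1%N 1%N n_gt1 n_gt1; rewrite !expr1 /actHs muln1 expr1.
have := cross 1%N 1%N n_gt1 n_gt1; rewrite cross_lhs_11 // cross_rhs_11 // P11 => e.
rewrite scalerBr -[Xs * X](addrK ((q - q^-1)^-1 *: G ^+ (n - 2))) -e.
by rewrite addrAC [q ^+ 2 *: _ + _]addrC addrK.
Qed.

End DegreeOne.

Section LinearExtension.
Variables (k : fieldType) (I : finType) (V : vectType k) (W : lmodType k).
Variables (eV : I -> V) (eW : I -> W).

Definition lin_ext (v : V) : W :=
  \sum_(i < #|I|) coord (codom_tuple eV) i v *: eW (enum_val i).

Fact lin_ext_is_linear : linear lin_ext.
Proof.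
move=> a u v; rewrite /lin_ext scaler_sumr -big_split; apply: eq_bigr => i _ /=.
by rewrite linearP scalerDl scalerA.
Qed.

HB.instance Definition _ := GRing.isLinear.Build k V W *:%R lin_ext lin_ext_is_linear.

Hypothesis eV_basis : basis_of fullv (codom eV).

Lemma lin_ext_basis i : lin_ext (eV i) = eW i.
Proof.
have -> : eV i = (codom_tuple eV)`_(enum_rank i) by rewrite nth_codom enum_rankK.
rewrite /lin_ext (bigD1 (enum_rank i)) //= big1 ?addr0.
  by rewrite coord_free ?(basis_free eV_basis) // eqxx scale1r enum_rankK.
by move=> j /negbTE ji; rewrite coord_free ?(basis_free eV_basis) // eq_sym ji scale0r.
Qed.

Lemma basis_span_ind (Q : V -> Prop) :
  Q 0 -> (forall a u v, Q u -> Q v -> Q (a *: u + v)) -> (forall i, Q (eV i)) ->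
  forall v, Q v.
Proof.
move=> Q0 QP Qe v; rewrite (coord_basis eV_basis (memvf v)).
elim/big_ind: _ => //.
  by move=> u w Qu Qw; rewrite -[u]scale1r; apply: QP.
by move=> i _; rewrite -[_ *: _]addr0; apply: QP => //; rewrite nth_codom.
Qed.
End LinearExtension.

Lemma mulr_expr_skew (k : fieldType) (B : algType k) (a b : B) (c : k) (m : nat) :
  a * b = c *: (b * a) -> a * b ^+ m = c ^+ m *: (b ^+ m * a).
Proof.
move=> ab; elim: m => [|m IHm]; first by rewrite !expr0 mul1r mulr1 scale1r.
rewrite exprSr mulrA IHm -scalerAl -[_ * a * b]mulrA ab -scalerAr scalerA.
by rewrite mulrA -!exprSr.
Qed.

Lemma mulr_expr_intertwine (R S : pzRingType) (f : R -> S) (a : R) (b : S) :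
  (forall w, f (a * w) = b * f w) -> forall m w, f (a ^+ m * w) = b ^+ m * f w.
Proof.
move=> fab; elim=> [|m IHm] w; first by rewrite !expr0 !mul1r.
by rewrite !exprS -!mulrA fab IHm.
Qed.

Definition pbw_word (R : pzRingType) (g x xs : R) (a b c : nat) : R := xs ^+ a * g ^+ b * x ^+ c.

Section Relations.
Variables (k : fieldType) (n : nat) (q : k) (B : algType k) (g x xs : B).
Hypotheses (q_neq0 : q != 0) (rel : drin_relations n q g x xs).

Lemma pbw_word_modn a b c : pbw_word g x xs a (b %% n) c = pbw_word g x xs a b c.
Proof.
case: rel => [[gn _ _] _].
by rewrite /pbw_word {2}(divn_eq b n) exprD mulnC exprM gn expr1n mul1r.
Qed.

Lemma pbw_word_xs_ge a b c : (n <= a)%N -> pbw_word g x xs a b c = 0.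
Proof.
case: rel => [[_ _ xsn] _] na.
by rewrite /pbw_word -(subnK na) exprD xsn !mulr0 !mul0r.
Qed.

Lemma pbw_word_x_ge a b c : (n <= c)%N -> pbw_word g x xs a b c = 0.
Proof.
case: rel => [[_ xn _] _] nc.
by rewrite /pbw_word -(subnK nc) exprD xn !mulr0.
Qed.

Lemma xs_pbw_word a b c : xs * pbw_word g x xs a b c = pbw_word g x xs a.+1 b c.
Proof. by rewrite /pbw_word !mulrA -exprS. Qed.

Lemma g_pbw_word a b c :
  g * pbw_word g x xs a b c = (q ^+ 2) ^+ a *: pbw_word g x xs a b.+1 c.
Proof.
case: rel => _ [_ gxs _].
by rewrite /pbw_word !mulrA (mulr_expr_skew _ gxs) -!scalerAl -(mulrA _ g) -exprS.
Qed.

Lemma x_pbw_word0 b c :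
  x * pbw_word g x xs 0 b c = (q ^+ 2) ^+ b *: pbw_word g x xs 0 b c.+1.
Proof.
case: rel => _ [gx _ _].
have xg : x * g = q ^+ 2 *: (g * x) by rewrite gx scalerA mulfV ?scale1r // expf_neq0.
by rewrite /pbw_word !expr0 !mul1r mulrA (mulr_expr_skew _ xg) -scalerAl -mulrA -exprS.
Qed.

Lemma x_xs_mulr w : x * (xs * w) =
  q ^- 2 *: (xs * (x * w)) - (q ^- 2 / (q - q^-1)) *: (w - g ^+ (n - 2) * w).
Proof.
case: rel => _ [_ _ cross].
have xxs : x * xs = q ^- 2 *: (xs * x - (q - q^-1)^-1 *: (1 - g ^+ (n - 2))).
  by rewrite -cross opprB addrC subrK scalerA mulVf ?scale1r // expf_neq0.
rewrite mulrA xxs -scalerAl mulrBl -scalerAl -!mulrA mulrBl mul1r.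
by rewrite scalerBr scalerA.
Qed.
End Relations.

Section Universality.
Variables (k : fieldType) (n : nat) (q : k) (A : falgType k) (G X Xs : A).
Hypotheses (q_neq0 : q != 0) (relA : drin_relations n q G X Xs).
Hypothesis pbw_basis : basis_of fullv (pbw n G X Xs).

Definition pbw_word_at (R : pzRingType) (g x xs : R) (t : 'I_n * 'I_n * 'I_n) : R :=
  pbw_word g x xs t.1.1 t.1.2 t.2.

Lemma pbw_span_ind (Q : A -> Prop) :
  Q 0 -> (forall a u v, Q u -> Q v -> Q (a *: u + v)) ->
  (forall a b c, (a < n)%N -> (b < n)%N -> (c < n)%N -> Q (pbw_word G X Xs a b c)) ->
  forall v, Q v.
Proof.
move=> Q0 QP Qw; apply: (basis_span_ind (eV := pbw_word_at G X Xs)) => // t.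
exact: Qw.
Qed.

Lemma lrmorph_eq_on_generators (B : algType k) (f1 f2 : {lrmorphism A -> B}) :
  f1 G = f2 G -> f1 X = f2 X -> f1 Xs = f2 Xs -> f1 =1 f2.
Proof.
move=> eG eX eXs; apply: pbw_span_ind => [|a u v eu ev|a b c _ _ _].
- by rewrite !linear0.
- by rewrite !linearP; congr (_ *: _ + _).
- by rewrite /pbw_word !rmorphM !rmorphXn; congr (_ ^+ _ * _ ^+ _ * _ ^+ _).
Qed.

Section Extension.
Variables (B : algType k) (g x xs : B).
Hypothesis relB : drin_relations n q g x xs.

Let f : {linear A -> B} := lin_ext (pbw_word_at G X Xs) (pbw_word_at g x xs).

Lemma ext_pbw_word a b c : f (pbw_word G X Xs a b c) = pbw_word g x xs a b c.
Proof.
have [na|an] := leqP n a.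
  by rewrite (pbw_word_xs_ge relA) ?(pbw_word_xs_ge relB) ?linear0.
have [nc|cn] := leqP n c.
  by rewrite (pbw_word_x_ge relA) ?(pbw_word_x_ge relB) ?linear0.
rewrite -(pbw_word_modn relA) -(pbw_word_modn relB).
have bn : (b %% n < n)%N by rewrite ltn_pmod //; case: n an {cn}.
exact: (lin_ext_basis (eV := pbw_word_at G X Xs) (pbw_word_at g x xs) pbw_basis
  (Ordinal an, Ordinal bn, Ordinal cn)).
Qed.

Lemma ext_mulr_of_words (y : A) (z : B) :
  (forall a b c, f (y * pbw_word G X Xs a b c) = z * pbw_word g x xs a b c) ->
  forall v, f (y * v) = z * f v.
Proof.
move=> yz; apply: pbw_span_ind => [|a u v IHu IHv|a b c _ _ _].
- by rewrite mulr0 !linear0 mulr0.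
- rewrite mulrDr -scalerAr !linearP mulrDr -scalerAr.
  by congr (_ *: _ + _); [exact: IHu | exact: IHv].
- by rewrite yz ext_pbw_word.
Qed.

Lemma ext_xs_mulr v : f (Xs * v) = xs * f v.
Proof. by apply: ext_mulr_of_words => a b c; rewrite !xs_pbw_word ext_pbw_word. Qed.

Lemma ext_g_mulr v : f (G * v) = g * f v.
Proof.
apply: ext_mulr_of_words => a b c.
by rewrite (g_pbw_word relA) linearZ ext_pbw_word (g_pbw_word relB).
Qed.

Lemma ext_x_pbw_word a b c : f (X * pbw_word G X Xs a b c) = x * pbw_word g x xs a b c.
Proof.
elim: a b c => [|a IHa] b c.
  by rewrite (x_pbw_word0 q_neq0 relA) linearZ ext_pbw_word (x_pbw_word0 q_neq0 relB).
rewrite -!xs_pbw_word (x_xs_mulr q_neq0 relA) (x_xs_mulr q_neq0 relB).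
by rewrite linearB !linearZ linearB ext_xs_mulr IHa (mulr_expr_intertwine ext_g_mulr) ext_pbw_word.
Qed.

Lemma ext_mul u v : f (u * v) = f u * f v.
Proof.
elim/pbw_span_ind: u => [|a u w IHu IHw|a b c _ _ _].
- by rewrite mul0r !linear0 mul0r.
- rewrite mulrDl -scalerAl !linearP mulrDl -scalerAl.
  by congr (_ *: _ + _); [exact: IHu | exact: IHw].
rewrite ext_pbw_word /pbw_word -!mulrA.
rewrite !(mulr_expr_intertwine ext_xs_mulr, mulr_expr_intertwine ext_g_mulr).
by rewrite (mulr_expr_intertwine (ext_mulr_of_words ext_x_pbw_word)).
Qed.

Lemma ext_generators : [/\ f 1 = 1, f G = g, f X = x & f Xs = xs].
Proof.
have := ext_pbw_word; rewrite /pbw_word => fw.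
by split; [move: (fw 0 0 0) | move: (fw 0 1 0) | move: (fw 0 0 1) | move: (fw 1 0 0)%N];
  rewrite !expr0 ?expr1 ?mulr1 ?mul1r.
Qed.

Lemma exists_lrmorph_ext : exists h : {lrmorphism A -> B}, [/\ h G = g, h X = x & h Xs = xs].
Proof.
have [f1 fG fX fXs] := ext_generators.
pose h := HB.pack_for {lrmorphism A -> B} (lin_ext (pbw_word_at G X Xs) (pbw_word_at g x xs))
  (GRing.isMonoidMorphism.Build A B _ (f1, ext_mul)).
by exists h.
Qed.
End Extension.
End Universality.

Lemma pbw_basis_presented_by (k : fieldType) (n : nat) (q : k) (A : falgType k) (G X Xs : A) :
  q != 0 -> drin_relations n q G X Xs -> basis_of fullv (pbw n G X Xs) ->
  presented_by n q G X Xs.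
Proof.
move=> q_neq0 relA bas B g x xs relB.
split; first exact: (exists_lrmorph_ext q_neq0 relA bas relB).
exact: (lrmorph_eq_on_generators bas).
Qed.

Theorem lemma6p6 (k : fieldType) (n : nat) (q : k) (P : nat -> nat -> k)
  (A : falgType k) (G X Xs : A) :
  (2 < n)%N -> n.-primitive_root (q ^+ 2) -> q != q^-1 ->
  hopf_pairing n q P -> P 1%N 1%N = (q - q^-1)^-1 ->
  braided_double n q P G X Xs ->
  [/\ delta_H n q G X 1 = tens (G ^+ (n - 1)) X + tens X 1,
      delta_Hs n q G Xs 1 = tens (G ^+ (n - 1)) Xs + tens Xs 1,
      drin_relations n q G X Xs
    & presented_by n q G X Xs].
Proof.
(* [q != q^-1] follows from [2 < n] and the primitivity of [q ^+ 2]. *)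
move=> n_gt2 prq _ hp P11 bd.
have n_gt1 : (1 < n)%N by apply: ltnW.
have : q ^+ 2 != 0 by rewrite (prim_root_eq0 prq) -lt0n ltnW.
rewrite expf_eq0 /= => q_neq0.
have rel := braided_double_relations prq n_gt1 hp P11 bd.
case: bd => [[Gn _ _] [bas _ _ _]].
split; [exact: delta_H_x | exact: delta_Hs_xs | exact: rel | exact: pbw_basis_presented_by].
Qed.
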